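(* Let $\gamma>0$, let $S=(S_1,\ldots,S_n)$ be nonnegative (positive semi-definite) nonzero symmetric $p\times p$ matrices, and let $f:\mathcal D_n^+\to\mathcal D_n^+$ be a stable mapping with Lipschitz parameter $\lambda_f$ for $d_s$ (i.e. $d_s(f(\Delta),f(\Delta'))\le\lambda_f d_s(\Delta,\Delta')$ for all $\Delta,\Delta'$). If $f$ is bounded from above (there is $f_0$ with $f(\Delta)\le f_0$ for all $\Delta$) or $\lambda_f<1$, then the equation $\Delta=I^S(f(\Delta))$ admits a unique solution $\Delta\in\mathcal D_n^+$.
   Context: $\mathcal D_n^+$ is the set of $n\times n$ diagonal matrices with positive diagonal entries; $d_s(\Delta,\Delta')=\max_i\frac{|\Delta_i-\Delta'_i|}{\sqrt{\Delta_i\Delta'_i}}$; $f$ is stable if it is $1$-Lipschitz for $d_s$. For $\Delta\in\mathcal D_n^+$, $Q_\gamma(S,\Delta)=\big(\frac1n\sum_{i=1}^n\Delta_iS_i+\gamma I_p\big)^{-1}$ and $I^S(\Delta)=\mathrm{diag}\big(\frac1n\operatorname{tr}(S_iQ_\gamma(S,\Delta))\big)_{1\le i\le n}$. *)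

From HB Require Import structures.
From mathcomp Require Import all_boot all_order all_algebra.
From mathcomp Require Import reals.
Set Implicit Arguments. Unset Strict Implicit. Unset Printing Implicit Defensive.
Import Order.TTheory GRing.Theory Num.Theory.
Local Open Scope ring_scope.

Section Defs.
Variable R : realType.

Definition Dpos n (D : 'M[R]_n) : bool :=
  is_diag_mx D && [forall i, 0 < D i i].

Definition ds n (D D' : 'M[R]_n) : R :=
  \big[Num.max/0]_(i < n) (`|D i i - D' i i| / Num.sqrt (D i i * D' i i)).

Definition psd p (A : 'M[R]_p) : Prop :=
  forall x : 'cV[R]_p, 0 <= (x^T *m A *m x) 0 0.

Definition Qg n p (gamma : R) (S : 'I_n -> 'M[R]_p) (D : 'M[R]_n) : 'M[R]_p :=
  invmx ((n%:R)^-1 *: (\sum_(i < n) D i i *: S i) + gamma%:M).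

Definition IS n p (gamma : R) (S : 'I_n -> 'M[R]_p) (D : 'M[R]_n) : 'M[R]_n :=
  diag_mx (\row_(i < n) ((n%:R)^-1 * \tr (S i *m Qg gamma S D))).
End Defs.

(* Write M(D) = (1/n) sum_j D_j S_j + gamma I, so that Q = Q_gamma(S, D) = M(D)^-1.
   The resolvent identity Q - Q' = Q (M(D') - M(D)) Q' gives
     I^S(D)_i - I^S(D')_i = sum_j (D'_j - D_j) n^-2 tr(S_i Q S_j Q'),
   and if c M(D) <= I then sum_j D_j n^-2 tr(S_i Q S_j Q) = n^-1 tr(S_i Q (M - gamma) Q)
   is at most (1 - gamma c) I^S(D)_i.  Cauchy-Schwarz for the nonnegative form
   (X, Y) |-> tr(S_i X S_j Y), then for sums over j, turns these into
   d_s(I^S(D), I^S(D')) <= (1 - gamma c) d_s(D, D').  If f is bounded, M(f(D)) is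
   bounded uniformly and some c > 0 works; if lambda_f < 1, c = 0 works.  Either way
   D |-> I^S(f(D)) contracts d_s by a factor < 1, and a d_s-contraction of D_n^+ has
   a unique fixed point: its iterates converge coordinatewise at a geometric rate,
   staying bounded away from 0 and infinity. *)

From mathcomp Require Import all_boot all_order all_algebra.
From mathcomp Require Import reals classical_sets topology normedtype sequences exp.
From mathcomp Require Import ring lra.
Import Order.TTheory GRing.Theory Num.Theory numFieldNormedType.Exports.
Local Open Scope ring_scope.
Set Implicit Arguments. Unset Strict Implicit. Unset Printing Implicit Defensive.

Section RatioDistance.
Variable R : realType.
Implicit Types (x y d C E mu : R) (a : nat -> R).

Definition rdist x y := `|x - y| / Num.sqrt (x * y).

Lemma rdist_ge0 x y : 0 <= rdist x y.
Proof. by rewrite divr_ge0 ?sqrtr_ge0. Qed.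

Lemma rdistC x y : rdist x y = rdist y x.
Proof. by rewrite /rdist distrC (mulrC x y). Qed.

Lemma rdist_le x y d : 0 < x -> 0 < y ->
  (rdist x y <= d) = (`|x - y| <= d * Num.sqrt (x * y)).
Proof. by move=> x0 y0; rewrite ler_pdivrMr ?sqrtr_gt0 ?mulr_gt0. Qed.

Lemma rdist_ratio x y d : 0 < x -> 0 < y -> rdist x y <= d ->
  x <= (1 + d) ^+ 2 * y.
Proof.
move=> x0 y0; rewrite (rdist_le _ x0 y0) sqrtrM ?(ltW x0) // => hst.
set s := Num.sqrt x in hst *; set t := Num.sqrt y in hst *.
have s0 : 0 < s by rewrite sqrtr_gt0.
have t0 : 0 < t by rewrite sqrtr_gt0.
have d0 : 0 <= d.
  by rewrite -(pmulr_lge0 _ (mulr_gt0 s0 t0)); exact: le_trans (normr_ge0 _) hst.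
have [xs yt] : x = s ^+ 2 /\ y = t ^+ 2 by rewrite !sqr_sqrtr ?(ltW x0) ?(ltW y0).
move: hst; rewrite xs yt -exprMn ler_pXn2r ?nnegrE ?mulr_ge0 ?addr_ge0 ?(ltW s0) ?(ltW t0) //.
move/(le_trans (ler_norm _)); nra.
Qed.

Lemma sqrtrM_le x y H : 0 <= x -> 0 <= y -> x <= H -> y <= H -> Num.sqrt (x * y) <= H.
Proof.
move=> x0 y0 xH yH; have H0 := le_trans x0 xH.
by rewrite -(ger0_norm H0) -sqrtr_sqr ler_sqrt ?sqr_ge0 // expr2 ler_pM.
Qed.

Lemma le_sqrtrM x y L : 0 <= L -> L <= x -> L <= y -> L <= Num.sqrt (x * y).
Proof.
move=> L0 Lx Ly; have x0 := le_trans L0 Lx; have y0 := le_trans L0 Ly.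
by rewrite -(ger0_norm L0) -sqrtr_sqr ler_sqrt ?mulr_ge0 // expr2 ler_pM.
Qed.

Lemma sqr1D_le_expR d : 0 <= d -> (1 + d) ^+ 2 <= expR (2 * d).
Proof.
move=> d0; rewrite mulr2n mulrDl mul1r expRD expr2.
by apply: ler_pM; rewrite ?expR_ge1Dx //; lra.
Qed.

Lemma le_geometric x y E mu : 0 <= mu -> mu < 1 ->
  (forall k, x <= y + E * mu ^+ k) -> x <= y.
Proof.
move=> mu0 mu1 hk.
have cvg_bound : ((fun k => y + E * mu ^+ k) @ \oo --> y + E * 0)%classic.
  apply: cvgD; first exact: cvg_cst.
  by apply: cvgM; [exact: cvg_cst | apply: cvg_expr; rewrite ger0_norm].
rewrite -[y]addr0 -(mulr0 E) -(cvg_lim _ cvg_bound) //.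
by apply: limr_ge; [exact: cvgP cvg_bound | exact: nearW].
Qed.

Lemma eq_geometric x y E mu : 0 <= mu -> mu < 1 ->
  (forall k, `|x - y| <= E * mu ^+ k) -> x = y.
Proof.
move=> mu0 mu1 hk; apply/eqP; rewrite -subr_eq0 -normr_le0.
by apply: (le_geometric (E := E) mu0 mu1) => k; rewrite add0r.
Qed.

Lemma geometric_limit a B mu : 0 <= mu -> mu < 1 ->
  (forall k, `|a k.+1 - a k| <= B * mu ^+ k) ->
  exists l, forall k, `|a k - l| <= B / (1 - mu) * mu ^+ k.
Proof.
move=> mu0 mu1 step; set E := B / (1 - mu).
have B0 : 0 <= B by have := le_trans (normr_ge0 _) (step 0%N); rewrite expr0 mulr1.
have Ek k : 0 <= E * mu ^+ k by rewrite mulr_ge0 ?exprn_ge0 ?divr_ge0 ?subr_ge0 ?(ltW mu1).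
have Estep k : E * mu ^+ k - E * mu ^+ k.+1 = B * mu ^+ k.
  by rewrite /E exprS; field; rewrite subr_eq0 gt_eqF.
(* The intervals [a_k - E mu^k, a_k + E mu^k] are nested. *)
pose lo k := a k - E * mu ^+ k; pose hi k := a k + E * mu ^+ k.
have lo_mono : {homo lo : i j / (i <= j)%N >-> i <= j}.
  apply: homo_leq => [//|? ? ?|k]; first exact: le_trans.
  by have := step k; have := Estep k; rewrite ler_norml /lo; lra.
have hi_mono : {homo hi : i j / (i <= j)%N >-> j <= i}.
  apply: (homo_leq (r := fun x y => y <= x)) => [//|? ? ? h1 h2|k].
    exact: le_trans h2 h1.
  by have := step k; have := Estep k; rewrite ler_norml /hi; lra.
have lo_hi j k : lo j <= hi k.
  apply: (le_trans (lo_mono _ _ (leq_maxl j k))).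
  apply: le_trans (hi_mono _ _ (leq_maxr j k)).
  by rewrite /lo /hi lerD2l lerNl (le_trans _ (Ek _)) // oppr_le0.
have lo_sup : has_sup (range lo) by split; [exists (lo 0%N) | exists (hi 0%N) => _ [j _ <-]].
exists (sup (range lo)) => k.
have : sup (range lo) <= hi k by apply: ge_sup => [|_ [j _ <-]]; [exists (lo 0%N) | exact: lo_hi].
have : lo k <= sup (range lo) by apply: sup_upper_bound => //; exists k.
by rewrite ler_norml /lo /hi; lra.
Qed.

Lemma rdist_geometric_bounded a C mu : 0 <= C -> 0 <= mu -> mu < 1 ->
  (forall k, 0 < a k) -> (forall k, rdist (a k.+1) (a k) <= C * mu ^+ k) ->
  exists L H, 0 < L /\ forall k, L <= a k <= H.
Proof.
move=> C0 mu0 mu1 apos step.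
pose g k := 2 * C * (1 - mu ^+ k) / (1 - mu); set G := 2 * C / (1 - mu).
have gS k : g k.+1 = g k + 2 * (C * mu ^+ k).
  by rewrite /g exprS; field; rewrite subr_eq0 gt_eqF.
have g_le k : g k <= G.
  rewrite ler_pM2r ?invr_gt0 ?subr_gt0 // ler_piMr ?mulr_ge0 //.
  by rewrite lerBlDr lerDl exprn_ge0.
have ratio k : (a k.+1 <= a k * expR (2 * (C * mu ^+ k))) *
               (a k <= a k.+1 * expR (2 * (C * mu ^+ k))).
  have sqr_le := sqr1D_le_expR (mulr_ge0 C0 (exprn_ge0 k mu0)).
  split; rewrite mulrC; apply: le_trans (ler_wpM2r (ltW (apos _)) sqr_le).
    exact: rdist_ratio.
  by apply: rdist_ratio; rewrite // rdistC.
have bound k : a 0%N * expR (- g k) <= a k <= a 0%N * expR (g k).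
  elim: k => [|k /andP[lo hi]].
    by rewrite /g expr0 subrr !(mulr0, mul0r, oppr0) expR0 mulr1 lexx.
  rewrite gS opprD !expRD (expRN (2 * _)).
  set e := expR (2 * (C * mu ^+ k)); have e0 : 0 < e := expR_gt0 _.
  rewrite !mulrA; apply/andP; split.
    apply: (@le_trans _ _ (a k / e)); first by rewrite ler_pM2r ?invr_gt0.
    by rewrite ler_pdivrMr // (ratio k).2.
  by apply: le_trans (ratio k).1 _; rewrite ler_pM2r.
exists (a 0%N * expR (- G)), (a 0%N * expR G); split => [|k].
  by rewrite mulr_gt0 ?expR_gt0.
have /andP[lo hi] := bound k; apply/andP; split.
  by apply: le_trans lo; rewrite ler_pM2l // ler_expR lerN2.
by apply: le_trans hi _; rewrite ler_pM2l // ler_expR.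
Qed.

Lemma rdist_geometric_limit a C mu : 0 <= C -> 0 <= mu -> mu < 1 ->
  (forall k, 0 < a k) -> (forall k, rdist (a k.+1) (a k) <= C * mu ^+ k) ->
  exists l E, 0 < l /\ forall k, rdist l (a k) <= E * mu ^+ k.
Proof.
move=> C0 mu0 mu1 apos step.
have [L [H [L0 aLH]]] := rdist_geometric_bounded C0 mu0 mu1 apos step.
have H0 : 0 <= H by have /andP[h1 h2] := aLH 0%N; exact: le_trans (ltW L0) (le_trans h1 h2).
have [l hl] : exists l, forall k, `|a k - l| <= C * H / (1 - mu) * mu ^+ k.
  apply: geometric_limit => // k.
  move: (step k); rewrite rdist_le // => /le_trans; apply.
  rewrite mulrAC ler_wpM2r ?exprn_ge0 // ler_wpM2l // sqrtrM_le ?(ltW (apos _)) //.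
    by case/andP: (aLH k.+1).
  by case/andP: (aLH k).
have Ll : L <= l.
  apply: (le_geometric (E := C * H / (1 - mu)) mu0 mu1) => k.
  by have := hl k; have /andP[+ _] := aLH k; rewrite ler_norml; lra.
set K := C * H / (1 - mu) in hl *.
have K0 : 0 <= K by rewrite divr_ge0 ?mulr_ge0 ?subr_ge0 ?(ltW mu1).
exists l, (K / L); split => [|k]; first exact: lt_le_trans Ll.
have L_le : L <= Num.sqrt (l * a k) by rewrite le_sqrtrM ?(ltW L0) //; case/andP: (aLH k).
rewrite rdist_le ?(lt_le_trans L0 Ll) // distrC (le_trans (hl k)) //.
rewrite [X in _ <= X]mulrAC ler_wpM2r ?exprn_ge0 // -mulrA ler_peMr //.
by rewrite mulrC ler_pdivlMr // mul1r.
Qed.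

Lemma rdist_geometric_eq c l (x : nat -> R) K E mu : 0 < c -> 0 < l ->
  0 <= mu -> mu < 1 -> (forall k, 0 < x k) ->
  (forall k, rdist c (x k) <= K * mu ^+ k) ->
  (forall k, rdist l (x k) <= E * mu ^+ k) -> c = l.
Proof.
move=> c0 l0 mu0 mu1 xpos hc hl.
have K0 : 0 <= K by have := le_trans (rdist_ge0 _ _) (hc 0%N); rewrite expr0 mulr1.
have E0 : 0 <= E by have := le_trans (rdist_ge0 _ _) (hl 0%N); rewrite expr0 mulr1.
set H := (1 + E) ^+ 2 * l.
have xH k : x k <= H.
  apply: rdist_ratio => //; rewrite rdistC (le_trans (hl k)) //.
  exact: ler_piMr E0 (exprn_ile1 _ mu0 (ltW mu1)).
have sqrt_le y k : 0 < y -> Num.sqrt (y * x k) <= Num.sqrt (y * H).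
  move=> y0; have H0 : 0 <= H := le_trans (ltW (xpos k)) (xH k).
  by rewrite ler_sqrt ?ler_pM2l ?xH // mulr_ge0 ?(ltW y0).
apply: (eq_geometric (E := K * Num.sqrt (c * H) + E * Num.sqrt (l * H)) mu0 mu1) => k.
rewrite -(subrKA (x k)) (le_trans (ler_normD _ _)) // mulrDl lerD //.
  move: (hc k); rewrite rdist_le // => /le_trans; apply.
  by rewrite mulrAC ler_wpM2r ?exprn_ge0 // ler_wpM2l ?sqrt_le.
move: (hl k); rewrite rdist_le // distrC => /le_trans; apply.
by rewrite mulrAC ler_wpM2r ?exprn_ge0 // ler_wpM2l ?sqrt_le.
Qed.

End RatioDistance.

Section DiagonalDistance.
Variables (R : realType) (n : nat).
Implicit Types (D : 'M[R]_n).

Lemma Dpos_diag D : Dpos D -> is_diag_mx D.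
Proof. by case/andP. Qed.

Lemma Dpos_gt0 D i : Dpos D -> 0 < D i i.
Proof. by case/andP=> _ /forallP. Qed.

Lemma Dpos_diag_mx (v : 'I_n -> R) : (forall i, 0 < v i) -> Dpos (diag_mx (\row_i v i)).
Proof.
move=> v0; rewrite /Dpos diag_mx_is_diag; apply/forallP => i.
by rewrite !mxE eqxx mulr1n.
Qed.

Lemma Dpos1 : Dpos (1%:M : 'M[R]_n).
Proof. by rewrite /Dpos scalar_mx_is_diag; apply/forallP => i; rewrite mxE eqxx ltr01. Qed.

Lemma Dpos_eq D D' : Dpos D -> Dpos D' -> (forall i, D i i = D' i i) -> D = D'.
Proof.
move=> /Dpos_diag/is_diag_mxP dD /Dpos_diag/is_diag_mxP dD' eqD.
apply/matrixP => i j; have [<-|ij] := eqVneq i j; first exact: eqD.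
by rewrite dD ?dD'.
Qed.

Lemma dsE D D' : ds D D' = \big[Num.max/0]_i rdist (D i i) (D' i i).
Proof. by []. Qed.

Lemma ds_ge0 D D' : 0 <= ds D D'.
Proof. exact: bigmax_ge_id. Qed.

Lemma rdist_le_ds D D' i : rdist (D i i) (D' i i) <= ds D D'.
Proof. by rewrite dsE; apply: le_bigmax. Qed.

Lemma ds_le D D' x : 0 <= x -> (forall i, rdist (D i i) (D' i i) <= x) -> ds D D' <= x.
Proof. by move=> x0 le_x; rewrite dsE; apply: bigmax_le. Qed.

Lemma ds_le0 D D' : Dpos D -> Dpos D' -> ds D D' <= 0 -> D = D'.
Proof.
move=> pD pD' ds0; apply: Dpos_eq => // i; apply/eqP; rewrite -subr_eq0 -normr_le0.
have := le_trans (rdist_le_ds D D' i) ds0.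
by rewrite rdist_le ?Dpos_gt0 // mul0r.
Qed.

End DiagonalDistance.

Section ContractionFixpoint.
Variables (R : realType) (n : nat) (F : 'M[R]_n -> 'M[R]_n) (mu : R).
Hypotheses (mu0 : 0 <= mu) (mu1 : mu < 1).
Hypothesis F_Dpos : forall D, Dpos D -> Dpos (F D).
Hypothesis F_contract : forall D D', Dpos D -> Dpos D' -> ds (F D) (F D') <= mu * ds D D'.

Lemma contraction_fixpoint_unique D D' : Dpos D -> Dpos D' ->
  D = F D -> D' = F D' -> D = D'.
Proof.
move=> pD pD' FD FD'; apply: ds_le0 => //.
have := F_contract pD pD'; rewrite -FD -FD' => contract.
have : (1 - mu) * ds D D' <= 0 by lra.
by rewrite pmulr_rle0 // subr_gt0.
Qed.

Let X k := iter k F 1%:M.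

Let X_Dpos k : Dpos (X k).
Proof. by elim: k => [|k /F_Dpos]; [exact: Dpos1|]. Qed.

Let X_step k : ds (X k.+1) (X k) <= ds (X 1%N) (X 0%N) * mu ^+ k.
Proof.
elim: k => [|k IH]; first by rewrite expr0 mulr1.
apply: le_trans (F_contract (X_Dpos k.+1) (X_Dpos k)) _.
by rewrite exprS mulrCA ler_wpM2l.
Qed.

Lemma contraction_fixpoint_exists : exists2 D, Dpos D & D = F D.
Proof.
have /fin_all_exists [lE lim_lE] i : exists lE : R * R,
    0 < lE.1 /\ forall k, rdist lE.1 (X k i i) <= lE.2 * mu ^+ k.
  have [||l [E]] := rdist_geometric_limit (a := fun k => X k i i) (ds_ge0 (X 1%N) (X 0%N)) mu0 mu1.
  - by move=> k; apply: Dpos_gt0.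
  - by move=> k; apply: le_trans (X_step k); apply: rdist_le_ds.
  by exists (l, E).
pose Ds := diag_mx (\row_i (lE i).1).
have Ds_ii i : Ds i i = (lE i).1 by rewrite !mxE eqxx mulr1n.
have pDs : Dpos Ds by apply: Dpos_diag_mx => i; case: (lim_lE i).
set E := \big[Num.max/0]_i (lE i).2.
have Ds_lim k : ds Ds (X k) <= E * mu ^+ k.
  apply: ds_le => [|i]; first by rewrite mulr_ge0 ?exprn_ge0 ?bigmax_ge_id.
  rewrite Ds_ii; apply: le_trans (proj2 (lim_lE i) k) _.
  by rewrite ler_wpM2r ?exprn_ge0 // (le_bigmax _ (fun i => (lE i).2)).
exists Ds => //; apply: Dpos_eq => // [|i]; first exact: F_Dpos.
rewrite Ds_ii; have [l0 lim_l] := lim_lE i.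
apply: (@rdist_geometric_eq _ _ _ (fun k => X k.+1 i i) ((lE i).2 * mu) (mu * E) mu) => //.
- exact: Dpos_gt0 (F_Dpos pDs).
- by move=> k; apply: Dpos_gt0.
- by move=> k; rewrite -mulrA -exprS.
- move=> k; rewrite -mulrA; apply: le_trans (rdist_le_ds _ _ i) _.
  by apply: le_trans (F_contract pDs (X_Dpos k)) _; rewrite ler_wpM2l.
Qed.

Theorem contraction_fixpoint : exists! D, Dpos D /\ D = F D.
Proof.
have [D pD FD] := contraction_fixpoint_exists.
by exists D; split=> // D' [pD' FD']; apply: contraction_fixpoint_unique.
Qed.
End ContractionFixpoint.

Lemma quad_ge0_discr (R : realFieldType) (a b c : R) : 0 <= c ->
  (forall t, 0 <= a + 2 * t * b + t ^+ 2 * c) -> b ^+ 2 <= a * c.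
Proof.
move=> c0 quad_ge0; have [c_eq0|c_neq0] := eqVneq c 0.
  rewrite c_eq0 mulr0; have [->|b_neq0] := eqVneq b 0; first by rewrite expr0n.
  have := quad_ge0 (- (a + 1) / (2 * b)); rewrite c_eq0 mulr0 addr0.
  have -> : 2 * (- (a + 1) / (2 * b)) * b = - (a + 1) by field.
  lra.
have c_gt0 : 0 < c by rewrite lt_def c_neq0.
have := quad_ge0 (- b / c).
have -> : a + 2 * (- b / c) * b + (- b / c) ^+ 2 * c = a - b ^+ 2 / c by field.
by rewrite subr_ge0 ler_pdivrMr.
Qed.

Lemma sum_sqrt_CauchySchwarz (R : rcfType) n (u v : 'I_n -> R) :
  (forall j, 0 <= u j) -> (forall j, 0 <= v j) ->
  \sum_j Num.sqrt (u j) * Num.sqrt (v j) <= Num.sqrt (\sum_j u j) * Num.sqrt (\sum_j v j).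
Proof.
move=> u0 v0; have su0 : 0 <= \sum_j u j by apply: sumr_ge0.
have sv0 : 0 <= \sum_j v j by apply: sumr_ge0.
rewrite -sqrtrM // -[X in X <= _]ger0_norm ?sumr_ge0 // => [|j _]; last first.
  by rewrite mulr_ge0 ?sqrtr_ge0.
rewrite -sqrtr_sqr ler_sqrt ?mulr_ge0 //; apply: quad_ge0_discr => // t.
have -> : \sum_j u j + 2 * t * (\sum_j Num.sqrt (u j) * Num.sqrt (v j)) + t ^+ 2 * \sum_j v j
    = \sum_j (Num.sqrt (u j) + t * Num.sqrt (v j)) ^+ 2.
  rewrite !mulr_sumr -!big_split /=; apply: eq_bigr => j _.
  rewrite -{1}(sqr_sqrtr (u0 j)) -{2}(sqr_sqrtr (v0 j)); ring.
by apply: sumr_ge0 => j _; apply: sqr_ge0.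
Qed.

(* The scalar core of the contraction estimate for I^S: x, x' stand for I^S(D)_i,
   I^S(D')_i and G_j, G'_j, H_j for n^-2 tr(S_i Q S_j Q), n^-2 tr(S_i Q' S_j Q'),
   n^-2 tr(S_i Q S_j Q'). *)
Lemma weighted_rdist_estimate (R : rcfType) n (D D' G G' H : 'I_n -> R) (d kappa x x' : R) :
  (forall j, 0 < D j) -> (forall j, 0 < D' j) ->
  (forall j, 0 <= G j) -> (forall j, 0 <= G' j) -> (forall j, H j ^+ 2 <= G j * G' j) ->
  0 <= d -> (forall j, `|D j - D' j| <= d * Num.sqrt (D j * D' j)) ->
  0 <= kappa -> 0 <= x -> 0 <= x' ->
  \sum_j D j * G j <= kappa * x -> \sum_j D' j * G' j <= kappa * x' ->
  x - x' = \sum_j (D' j - D j) * H j ->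
  `|x - x'| <= d * kappa * Num.sqrt (x * x').
Proof.
move=> D0 D'0 G0 G'0 HG d0 dD k0 x0 x'0 sumG sumG' ->.
have DG0 j : 0 <= D j * G j := mulr_ge0 (ltW (D0 j)) (G0 j).
have DG'0 j : 0 <= D' j * G' j := mulr_ge0 (ltW (D'0 j)) (G'0 j).
have term_le j : `|(D' j - D j) * H j| <=
    d * (Num.sqrt (D j * G j) * Num.sqrt (D' j * G' j)).
  have HG_sqrt : `|H j| <= Num.sqrt (G j * G' j).
    by rewrite -sqrtr_sqr ler_sqrt ?mulr_ge0 // real_normK ?num_real.
  rewrite normrM distrC; apply: le_trans (ler_pM _ _ (dD j) HG_sqrt) _ => //.
  rewrite -mulrA ler_wpM2l // -!sqrtrM ?mulr_ge0 ?(ltW (D0 j)) ?(ltW (D'0 j)) //.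
  by rewrite le_eqVlt; apply/orP; left; apply/eqP; congr Num.sqrt; ring.
apply: le_trans (ler_norm_sum _ _ _) _; apply: le_trans (ler_sum _ (fun j _ => term_le j)) _.
rewrite -mulr_sumr -mulrA ler_wpM2l //; apply: le_trans (sum_sqrt_CauchySchwarz DG0 DG'0) _.
have -> : kappa * Num.sqrt (x * x') = Num.sqrt (kappa * x) * Num.sqrt (kappa * x').
  rewrite -sqrtrM ?mulr_ge0 // mulrACA -expr2 (sqrtrM (x * x') (sqr_ge0 kappa)).
  by rewrite sqrtr_sqr ger0_norm.
by apply: ler_pM; rewrite ?sqrtr_ge0 // ler_sqrt ?mulr_ge0.
Qed.

Section PositiveSemiDefinite.
Variable R : realType.

Definition bform p (A : 'M[R]_p) (x y : 'cV[R]_p) : R := (x^T *m A *m y) 0 0.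

Lemma psdE p (A : 'M[R]_p) : psd A <-> forall x, 0 <= bform A x x.
Proof. by []. Qed.

Lemma bformDm p (A B : 'M[R]_p) x y : bform (A + B) x y = bform A x y + bform B x y.
Proof. by rewrite /bform mulmxDr mulmxDl mxE. Qed.

Lemma bformZm p c (A : 'M[R]_p) x y : bform (c *: A) x y = c * bform A x y.
Proof. by rewrite /bform -scalemxAr -scalemxAl mxE. Qed.

Lemma bformBm p (A B : 'M[R]_p) x y : bform (A - B) x y = bform A x y - bform B x y.
Proof. by rewrite bformDm -scaleN1r bformZm mulN1r. Qed.

Lemma bform_summ p n (F : 'I_n -> 'M[R]_p) x y :
  bform (\sum_i F i) x y = \sum_i bform (F i) x y.
Proof.
elim/big_rec2: _ => [|i a B _ <-]; last by rewrite bformDm.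
by rewrite /bform mulmx0 mul0mx mxE.
Qed.

Lemma bformDl p (A : 'M[R]_p) x1 x2 y : bform A (x1 + x2) y = bform A x1 y + bform A x2 y.
Proof. by rewrite /bform linearD /= !mulmxDl mxE. Qed.

Lemma bformZl p (A : 'M[R]_p) c x y : bform A (c *: x) y = c * bform A x y.
Proof. by rewrite /bform linearZ /= -!scalemxAl mxE. Qed.

Lemma bformDr p (A : 'M[R]_p) x y1 y2 : bform A x (y1 + y2) = bform A x y1 + bform A x y2.
Proof. by rewrite /bform mulmxDr mxE. Qed.

Lemma bformZr p (A : 'M[R]_p) c x y : bform A x (c *: y) = c * bform A x y.
Proof. by rewrite /bform -scalemxAr mxE. Qed.

Lemma bformC p (A : 'M[R]_p) x y : A^T = A -> bform A x y = bform A y x.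
Proof.
move=> sA; have trE (M : 'M[R]_1) : M 0 0 = M^T 0 0 by rewrite mxE.
by rewrite /bform trE !trmx_mul trmxK sA mulmxA.
Qed.

Lemma bform_delta p (A : 'M[R]_p) i j : bform A (delta_mx i 0) (delta_mx j 0) = A i j.
Proof. by rewrite /bform trmx_delta -rowE -colE !mxE. Qed.

Lemma bform_scalar p c (x : 'cV[R]_p) : bform c%:M x x = c * \sum_i x i 0 ^+ 2.
Proof.
rewrite -scalemx1 bformZm /bform mulmx1 mxE; congr (_ * _).
by apply: eq_bigr => i _; rewrite mxE expr2.
Qed.

Lemma bform_CauchySchwarz p (A : 'M[R]_p) x y : A^T = A -> psd A ->
  bform A x y ^+ 2 <= bform A x x * bform A y y.
Proof.
move=> sA /psdE pA; apply: quad_ge0_discr => [|t]; first exact: pA.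
have := pA (x + t *: y).
by rewrite !(bformDl, bformDr, bformZl, bformZr) (bformC x y sA) => /le_trans; apply; lra.
Qed.

Lemma psdD p (A B : 'M[R]_p) : psd A -> psd B -> psd (A + B).
Proof. by move=> /psdE pA /psdE pB; apply/psdE => x; rewrite bformDm addr_ge0. Qed.

Lemma psdZ p c (A : 'M[R]_p) : 0 <= c -> psd A -> psd (c *: A).
Proof. by move=> c0 /psdE pA; apply/psdE => x; rewrite bformZm mulr_ge0. Qed.

Lemma psd_sum p n (c : 'I_n -> R) (A : 'I_n -> 'M[R]_p) :
  (forall i, 0 <= c i) -> (forall i, psd (A i)) -> psd (\sum_i c i *: A i).
Proof.
move=> c0 pA; apply/psdE => x; rewrite bform_summ sumr_ge0 // => i _.
by rewrite bformZm mulr_ge0 //; apply: pA.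
Qed.

Lemma psd_scalar p c : 0 <= c -> psd (c%:M : 'M[R]_p).
Proof.
move=> c0; apply/psdE => x; rewrite bform_scalar mulr_ge0 // sumr_ge0 // => i _.
exact: sqr_ge0.
Qed.

Lemma psd_congr p q (X : 'M[R]_(p, q)) (B : 'M[R]_p) : psd B -> psd (X^T *m B *m X).
Proof. by move=> pB x; have := pB (X *m x); rewrite trmx_mul !mulmxA. Qed.

Lemma psd_diag_ge0 p (A : 'M[R]_p) i : psd A -> 0 <= A i i.
Proof. by move=> /psdE pA; rewrite -bform_delta. Qed.

Lemma psd_tr_ge0 p (A : 'M[R]_p) : psd A -> 0 <= \tr A.
Proof. by move=> pA; apply: sumr_ge0 => i _; apply: psd_diag_ge0. Qed.

Lemma psd_offdiag_eq0 p (A : 'M[R]_p) i k : A^T = A -> psd A -> A k k = 0 -> A i k = 0.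
Proof.
move=> sA pA Akk; apply/eqP; rewrite -sqrf_eq0 eq_le sqr_ge0 andbT.
by have := bform_CauchySchwarz (delta_mx i 0) (delta_mx k 0) sA pA; rewrite !bform_delta Akk mulr0.
Qed.

Lemma psd_tr_gt0 p (A : 'M[R]_p) : A^T = A -> psd A -> A != 0 -> 0 < \tr A.
Proof.
move=> sA pA; apply: contraNT; rewrite -leNgt => tr_le0; apply/eqP/matrixP => i k.
have Akk : A k k = 0.
  apply: (psumr_eq0P (P := predT) (fun j _ => psd_diag_ge0 j pA)) => //.
  by apply/eqP; rewrite eq_le tr_le0 psd_tr_ge0.
by rewrite mxE psd_offdiag_eq0.
Qed.

Lemma psd_sub_rank1 p (B : 'M[R]_p) k : B^T = B -> psd B -> 0 < B k k ->
  psd (B - (B k k)^-1 *: (col k B *m (col k B)^T)).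
Proof.
move=> sB pB Bkk; apply/psdE => x.
have rank1 : bform (col k B *m (col k B)^T) x x = bform B x (delta_mx k 0) ^+ 2.
  rewrite /bform colE !mulmxA -(mulmxA _ _ x) [LHS]mxE big_ord1 expr2; congr (_ * _).
  by rewrite -mulmxA !mxE; apply: eq_bigr => j _; rewrite !mxE mulrC.
rewrite bformBm bformZm rank1 subr_ge0 ler_pdivrMl // mulrC.
by have := bform_CauchySchwarz x (delta_mx k 0) sB pB; rewrite bform_delta.
Qed.

Lemma psd_gram p (B : 'M[R]_p) : B^T = B -> psd B ->
  exists q (X : 'M[R]_(p, q)), B = X *m X^T.
Proof.
(* Induction on the number m of possibly nonzero leading rows; row m is cleared by
   subtracting a rank-one term (a Cholesky step). *)
suff gram m : forall B : 'M[R]_p, B^T = B -> psd B ->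
    (forall i j : 'I_p, (m <= i)%N -> B i j = 0) -> exists q (X : 'M[R]_(p, q)), B = X *m X^T.
  by move=> sB pB; apply: (gram p) => // i j; rewrite leqNgt ltn_ord.
elim: m => [|m IH] {}B sB pB Bz.
  by exists 0%N, 0; apply/matrixP => i j; rewrite Bz // mul0mx mxE.
have [mp|pm] := ltnP m p; last first.
  by apply: IH => // i j mi; have := leq_trans pm mi; rewrite leqNgt ltn_ord.
set k := Ordinal mp; have Bsym i j : B i j = B j i by rewrite -{1}sB mxE.
have [Bkk0|Bkk] : B k k = 0 \/ 0 < B k k.
  by have := psd_diag_ge0 k pB; rewrite le_eqVlt eq_sym => /orP[/eqP|]; [left|right].
  apply: IH => // i j; rewrite leq_eqVlt => /orP[/eqP mi|]; last exact: Bz.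
  have -> : i = k by apply: val_inj.
  by rewrite Bsym psd_offdiag_eq0.
set a := col k B; set B' := B - (B k k)^-1 *: (a *m a^T).
have [q [X B'E]] : exists q (X : 'M[R]_(p, q)), B' = X *m X^T.
  apply: IH; first by rewrite /B' linearB linearZ /= trmx_mul trmxK sB.
    exact: psd_sub_rank1.
  move=> i j; rewrite !mxE big_ord1 !mxE leq_eqVlt => /orP[/eqP mi|mi].
    have -> : i = k by apply: val_inj.
    by rewrite [B j k]Bsym mulrA mulVf ?gt_eqF // mul1r subrr.
  by rewrite (Bz i j) // (Bz i k) // mul0r mulr0 subrr.
exists (q + 1)%N, (row_mx X (Num.sqrt (B k k)^-1 *: a)).
rewrite tr_row_mx mul_row_col -B'E linearZ /= -scalemxAr -scalemxAl scalerA.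
by rewrite -expr2 sqr_sqrtr ?invr_ge0 ?(ltW Bkk) // subrK.
Qed.

Lemma mxtrace_psdM_ge0 p (A P : 'M[R]_p) : A^T = A -> psd A -> psd P -> 0 <= \tr (A *m P).
Proof.
move=> sA pA pP; have [q [X ->]] := psd_gram sA pA.
by rewrite -mulmxA mxtrace_mulC; exact/psd_tr_ge0/psd_congr.
Qed.

Lemma psd_l1_sub p (A : 'M[R]_p) : psd ((\sum_j \sum_i `|A i j|)%:M - A).
Proof.
apply/psdE => x; rewrite bformBm bform_scalar subr_ge0.
set s := \sum_k x k 0 ^+ 2.
have xs k : `|x k 0| ^+ 2 <= s.
  rewrite real_normK ?num_real // /s (bigD1 k) //= lerDl.
  by apply: sumr_ge0 => *; apply: sqr_ge0.
rewrite /bform mxE mulr_suml; apply: ler_sum => j _.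
rewrite mxE mulr_suml mulr_suml; apply: ler_sum => i _.
rewrite !mxE; apply: le_trans (ler_norm _) _; rewrite !normrM.
have : `|x i 0| * `|x j 0| <= s.
  by have := xs i; have := xs j; have := sqr_ge0 (`|x i 0| - `|x j 0|); nra.
by move=> xx; rewrite mulrAC [X in X <= _]mulrC ler_wpM2l.
Qed.

Lemma psd_sub_scalar_unitmx p (M : 'M[R]_p) gamma : 0 < gamma -> psd (M - gamma%:M) ->
  M \in unitmx.
Proof.
move=> gamma0 pM; rewrite -row_free_unit; apply: inj_row_free => v vM0.
have := pM v^T; rewrite -/(bform _ _ _) bformBm bform_scalar {1}/bform trmxK vM0.
rewrite mul0mx mxE sub0r oppr_ge0 pmulr_rle0 // => sum_le0.
apply/matrixP => i0 j; rewrite (ord1 i0) !mxE; apply/eqP; rewrite -sqrf_eq0 eq_le sqr_ge0 andbT.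
apply: le_trans sum_le0; rewrite (bigD1 j) //= mxE lerDl.
by apply: sumr_ge0 => k _; apply: sqr_ge0.
Qed.

Definition trform p (A B X Y : 'M[R]_p) : R := \tr (A *m X *m B *m Y).

Lemma trform_ge0 p (A B X : 'M[R]_p) : A^T = A -> psd A -> psd B -> X^T = X ->
  0 <= trform A B X X.
Proof.
move=> sA pA pB sX; have := mxtrace_psdM_ge0 sA pA (psd_congr X pB).
by rewrite sX !mulmxA.
Qed.

Lemma trformC p (A B X Y : 'M[R]_p) : A^T = A -> B^T = B -> X^T = X -> Y^T = Y ->
  trform A B Y X = trform A B X Y.
Proof.
move=> sA sB sX sY; rewrite /trform -[LHS]mxtrace_tr !trmx_mul sA sB sX sY.
by rewrite !mulmxA mxtrace_mulC !mulmxA.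
Qed.

Lemma trform_CauchySchwarz p (A B X Y : 'M[R]_p) : A^T = A -> psd A -> B^T = B -> psd B ->
  X^T = X -> Y^T = Y -> trform A B X Y ^+ 2 <= trform A B X X * trform A B Y Y.
Proof.
move=> sA pA sB pB sX sY; apply: quad_ge0_discr => [|t]; first exact: trform_ge0.
have sXY : (X + t *: Y)^T = X + t *: Y by rewrite linearD linearZ /= sX sY.
apply: le_trans (trform_ge0 sA pA pB sXY) _; rewrite le_eqVlt; apply/orP; left; apply/eqP.
rewrite /trform !(mulmxDl, mulmxDr, =^~ scalemxAl, =^~ scalemxAr) !linearD /= !mxtraceZ.
have := trformC sA sB sX sY; rewrite /trform => ->; ring.
Qed.

End PositiveSemiDefinite.

Lemma mxtrace_mul_sumZ (R : comPzRingType) p n (A B : 'M[R]_p) (c : 'I_n -> R)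
    (X : 'I_n -> 'M[R]_p) :
  \tr (A *m (\sum_j c j *: X j) *m B) = \sum_j c j * \tr (A *m X j *m B).
Proof.
rewrite mulmx_sumr mulmx_suml linear_sum; apply: eq_bigr => j _ /=.
by rewrite -scalemxAr -scalemxAl mxtraceZ.
Qed.

Lemma mxtrace_mul_invmx_gt0 (R : realType) p (gamma : R) (M A : 'M[R]_p) : 0 < gamma ->
  M^T = M -> psd (M - gamma%:M) -> M \in unitmx ->
  A^T = A -> psd A -> A != 0 -> 0 < \tr (A *m invmx M).
Proof.
move=> gamma0 sM pM uM sA pA A_neq0; set Q := invmx M.
have sQ : Q^T = Q by rewrite /Q trmx_inv sM.
have QAQ_neq0 : Q^T *m A *m Q != 0.
  apply: contraNneq A_neq0 => QAQ0.
  have <- : M^T *m (Q^T *m A *m Q) *m M = A.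
    by rewrite sQ sM /Q !mulmxA (mulmxV uM) mul1mx -mulmxA (mulVmx uM) mulmx1.
  by rewrite QAQ0 mulmx0 mul0mx.
have -> : \tr (A *m Q) = \tr ((M - gamma%:M) *m (Q^T *m A *m Q)) + gamma * \tr (Q^T *m A *m Q).
  rewrite mulmxBl linearB /= mul_scalar_mx mxtraceZ subrK sQ !mulmxA.
  by rewrite /Q (mulmxV uM) mul1mx.
have sQAQ : (Q^T *m A *m Q)^T = Q^T *m A *m Q by rewrite !trmx_mul trmxK sA mulmxA.
have pQAQ := psd_congr Q pA.
rewrite ltr_wpDl ?mulr_gt0 ?mxtrace_psdM_ge0 ?psd_tr_gt0 //.
by rewrite linearB /= sM tr_scalar_mx.
Qed.

Section Resolvent.
Variables (R : realType) (n p : nat) (gamma : R) (S : 'I_n -> 'M[R]_p).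
Hypotheses (gamma_gt0 : 0 < gamma) (S_sym : forall i, (S i)^T = S i)
  (S_psd : forall i, psd (S i)).
Implicit Types (D : 'M[R]_n).

Local Notation w := (n%:R^-1 : R).

Definition invQg D : 'M[R]_p := w *: (\sum_j D j j *: S j) + gamma%:M.

Lemma QgE D : Qg gamma S D = invmx (invQg D).
Proof. by []. Qed.

Lemma invQg_sym D : (invQg D)^T = invQg D.
Proof.
rewrite /invQg linearD linearZ /= tr_scalar_mx linear_sum; congr (_ *: _ + _).
by apply: eq_bigr => j _; rewrite linearZ /= S_sym.
Qed.

Lemma invQg_subE D : invQg D - gamma%:M = w *: (\sum_j D j j *: S j).
Proof. by rewrite addrK. Qed.

Lemma invQg_diff D D' : invQg D' - invQg D = w *: (\sum_j (D' j j - D j j) *: S j).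
Proof.
rewrite opprD addrACA subrr addr0 -scalerBr -sumrB.
by congr (_ *: _); apply: eq_bigr => j _; rewrite scalerBl.
Qed.

Lemma psd_invQg_sub D : (forall j, 0 <= D j j) -> psd (invQg D - gamma%:M).
Proof. by move=> D0; rewrite invQg_subE; apply: psdZ; [rewrite invr_ge0 | exact: psd_sum]. Qed.

Lemma invQg_unit D : (forall j, 0 <= D j j) -> invQg D \in unitmx.
Proof. by move=> D0; apply: (psd_sub_scalar_unitmx gamma_gt0); apply: psd_invQg_sub. Qed.

Lemma Qg_sym D : (forall j, 0 <= D j j) -> (Qg gamma S D)^T = Qg gamma S D.
Proof. by move=> D0; rewrite QgE trmx_inv invQg_sym. Qed.

Lemma IS_diagE D i : IS gamma S D i i = w * \tr (S i *m Qg gamma S D).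
Proof. by rewrite !mxE eqxx mulr1n. Qed.

Lemma IS_diag_gt0 D i : S i != 0 -> (forall j, 0 <= D j j) -> 0 < IS gamma S D i i.
Proof.
move=> Si_neq0 D0; rewrite IS_diagE mulr_gt0 ?invr_gt0 ?ltr0n ?(leq_ltn_trans _ (ltn_ord i)) //.
by rewrite QgE (mxtrace_mul_invmx_gt0 gamma_gt0) ?invQg_sym ?invQg_unit //; exact: psd_invQg_sub.
Qed.

Lemma Dpos_IS D : (forall i, S i != 0) -> Dpos D -> Dpos (IS gamma S D).
Proof.
move=> S_neq0 pD; rewrite /Dpos diag_mx_is_diag; apply/forallP => i.
by rewrite IS_diag_gt0 // => j; exact: ltW (Dpos_gt0 j pD).
Qed.

Section OnePoint.
Variables (D : 'M[R]_n) (i : 'I_n).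
Hypothesis D0 : forall j, 0 <= D j j.
Let Q := Qg gamma S D.

Lemma IS_weighted_le c : 0 <= c -> psd (1%:M - c *: invQg D) ->
  \sum_j D j j * (w * w * trform (S i) (S j) Q Q) <= (1 - gamma * c) * IS gamma S D i i.
Proof.
move=> c0 pc; have uM := invQg_unit D0.
have sumE : \sum_j D j j * (w * w * trform (S i) (S j) Q Q)
    = w * (\tr (S i *m Q) - gamma * \tr (S i *m Q *m Q)).
  transitivity (w * \tr (S i *m Q *m (invQg D - gamma%:M) *m Q)).
    rewrite invQg_subE -scalemxAr -scalemxAl mxtraceZ mxtrace_mul_sumZ !mulr_sumr.
    by apply: eq_bigr => j _; rewrite /trform; ring.
  rewrite mulmxBr mulmxBl linearB /= -!mulmxA /Q QgE (mulmxV uM) mulmx1 mul_scalar_mx.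
  by rewrite -!scalemxAr mxtraceZ !mulmxA.
(* Conjugating c (invQg D) <= 1 by Q gives c Q <= Q^2. *)
have cQ : c * \tr (S i *m Q) <= \tr (S i *m Q *m Q).
  have := mxtrace_psdM_ge0 (S_sym i) (S_psd i) (psd_congr Q pc).
  rewrite (Qg_sym D0) mulmxBr mulmx1 -scalemxAr QgE (mulVmx uM) mulmxBl.
  by rewrite -scalemxAl mul1mx mulmxBr -scalemxAr linearB /= mxtraceZ subr_ge0 mulmxA.
rewrite sumE IS_diagE mulrCA ler_wpM2l ?invr_ge0 // mulrBl mul1r lerD2l lerN2 -mulrA.
by rewrite ler_wpM2l ?(ltW gamma_gt0).
Qed.

End OnePoint.

Section TwoPoints.
Variables (D D' : 'M[R]_n) (i : 'I_n).
Hypotheses (D0 : forall j, 0 <= D j j) (D'0 : forall j, 0 <= D' j j).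
Let Q := Qg gamma S D.
Let Q' := Qg gamma S D'.

Lemma IS_diag_sub : IS gamma S D i i - IS gamma S D' i i =
  \sum_j (D' j j - D j j) * (w * w * trform (S i) (S j) Q Q').
Proof.
have uM := invQg_unit D0; have uM' := invQg_unit D'0.
have QQ' : Q - Q' = Q *m (invQg D' - invQg D) *m Q'.
  rewrite mulmxBr mulmxBl /Q /Q' !QgE -!mulmxA (mulmxV uM') mulmx1.
  by rewrite mulmxA (mulVmx uM) mul1mx.
rewrite !IS_diagE -mulrBr -linearB /= -mulmxBr QQ' invQg_diff !mulmxA.
rewrite -scalemxAr -scalemxAl mxtraceZ mxtrace_mul_sumZ !mulr_sumr.
by apply: eq_bigr => j _; rewrite /trform; ring.
Qed.

End TwoPoints.

Lemma ds_IS_le D D' c : (forall i, S i != 0) -> Dpos D -> Dpos D' ->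
  0 <= c -> gamma * c <= 1 -> psd (1%:M - c *: invQg D) -> psd (1%:M - c *: invQg D') ->
  ds (IS gamma S D) (IS gamma S D') <= (1 - gamma * c) * ds D D'.
Proof.
move=> S_neq0 pD pD' c0 gc pc pc'.
have D0 j : 0 <= D j j := ltW (Dpos_gt0 j pD).
have D'0 j : 0 <= D' j j := ltW (Dpos_gt0 j pD').
have [sQ sQ'] := (Qg_sym D0, Qg_sym D'0).
have w0 : 0 <= w by rewrite invr_ge0.
have ww : 0 <= w * w by rewrite mulr_ge0.
apply: ds_le => [|i]; first by rewrite mulr_ge0 ?subr_ge0 ?ds_ge0.
rewrite rdist_le ?IS_diag_gt0 // [_ * ds D D']mulrC.
pose G D1 D2 j := w * w * trform (S i) (S j) (Qg gamma S D1) (Qg gamma S D2).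
apply: (weighted_rdist_estimate (D := fun j => D j j) (D' := fun j => D' j j)
  (G := G D D) (G' := G D' D') (H := G D D')).
- by move=> j; apply: Dpos_gt0.
- by move=> j; apply: Dpos_gt0.
- by move=> j; rewrite mulr_ge0 ?trform_ge0.
- by move=> j; rewrite mulr_ge0 ?trform_ge0.
- move=> j; rewrite /G mulrACA exprMn -expr2 ler_wpM2l ?exprn_ge0 //.
  exact: trform_CauchySchwarz.
- exact: ds_ge0.
- by move=> j; rewrite -rdist_le ?Dpos_gt0 ?rdist_le_ds.
- by rewrite subr_ge0.
- exact/ltW/IS_diag_gt0.
- exact/ltW/IS_diag_gt0.
- exact: IS_weighted_le.
- exact: IS_weighted_le.
- exact: IS_diag_sub.
Qed.

(* c = 1/K, where K I bounds invQg f0 in the Loewner order; invQg is monotone in D. *)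
Lemma invQg_bounded (f0 : 'M[R]_n) : exists2 c, 0 < c &
  gamma * c <= 1 /\ forall D, (forall j, 0 <= D j j <= f0 j j) -> psd (1%:M - c *: invQg D).
Proof.
set L := \sum_j \sum_i `|invQg f0 i j|; set K := L + gamma.
have L0 : 0 <= L by apply: sumr_ge0 => j _; apply: sumr_ge0.
have K0 : 0 < K by rewrite ltr_wpDl.
exists K^-1; first by rewrite invr_gt0.
split=> [|D D_le]; first by rewrite mulrC ler_pdivrMl // mulr1 lerDr.
have -> : 1%:M - K^-1 *: invQg D = K^-1 *: (gamma%:M + (L%:M - invQg f0) + (invQg f0 - invQg D)).
  rewrite -addrA subrKA addrA -raddfD /= (addrC gamma) scalerBr scale_scalar_mx.
  by rewrite mulVf ?gt_eqF.
apply: psdZ; first by rewrite invr_ge0 (ltW K0).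
apply: psdD; first by apply: psdD; [exact/psd_scalar/ltW | exact: psd_l1_sub].
rewrite invQg_diff; apply: psdZ; first by rewrite invr_ge0.
by apply: psd_sum => // j; rewrite subr_ge0; case/andP: (D_le j).
Qed.

End Resolvent.

Theorem corollary2 (R : realType) (n p : nat) (gamma : R)
    (S : 'I_n -> 'M[R]_p) (f : 'M[R]_n -> 'M[R]_n) (lamf : R) :
  0 < gamma ->
  (forall i, (S i)^T = S i) ->
  (forall i, psd (S i)) ->
  (forall i, S i != 0) ->
  (forall D, Dpos D -> Dpos (f D)) ->
  0 <= lamf -> lamf <= 1 ->
  (forall D D', Dpos D -> Dpos D' -> ds (f D) (f D') <= lamf * ds D D') ->
  ((exists f0 : 'M[R]_n, Dpos f0 /\
      forall D, Dpos D -> forall i, f D i i <= f0 i i) \/ lamf < 1) ->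
  exists! D : 'M[R]_n, Dpos D /\ D = IS gamma S (f D).
Proof.
move=> gamma0 S_sym S_psd S_neq0 f_Dpos lamf0 lamf1 f_lip f_cases.
suff [c [c0 gc contr c_psd]] : exists c, [/\ 0 <= c, gamma * c <= 1,
    (1 - gamma * c) * lamf < 1 & forall D, Dpos D -> psd (1%:M - c *: invQg gamma S (f D))].
  apply: (contraction_fixpoint (mu := (1 - gamma * c) * lamf)) => //.
  - by rewrite mulr_ge0 ?subr_ge0.
  - by move=> D pD; apply/Dpos_IS/f_Dpos.
  move=> D D' pD pD'; rewrite -mulrA.
  apply: le_trans (ds_IS_le gamma0 S_sym S_psd S_neq0 (f_Dpos _ pD) (f_Dpos _ pD') c0 gc
    (c_psd _ pD) (c_psd _ pD')) _.
  by rewrite ler_wpM2l ?subr_ge0 ?f_lip.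
case: f_cases => [[f0 [_ f_le]]|lamf_lt1].
  have [c c_gt0 [gc c_psd]] := invQg_bounded gamma0 S_psd f0.
  exists c; split => // [||D pD]; first exact: ltW.
    apply: le_lt_trans (ler_piMr _ lamf1) _; first by rewrite subr_ge0.
    by rewrite ltrBlDr ltrDl mulr_gt0.
  by apply: c_psd => j; rewrite f_le // andbT; exact/ltW/Dpos_gt0/f_Dpos.
exists 0; split; rewrite ?mulr0 ?subr0 ?mul1r ?ler01 // => D _.
by rewrite scale0r subr0; apply/psd_scalar/ler01.
Qed.
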